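(* Let $X$ be a distance-regular graph of diameter $d\geq 2$ with degree $k$, $\lambda=a_1$ and $\mu=c_2$. Then $k-\mu\leq 2(k-\lambda)$. If moreover $a_2\neq 0$, then also $k-\lambda\leq 2(k-\mu)$.
   Context: A connected graph $X$ of diameter $d$ is distance-regular if there are integers $a_i,b_i,c_i$ ($0\le i\le d$) such that for all vertices $v,w$ with $\mathrm{dist}(v,w)=i$, $w$ has exactly $c_i$ neighbours at distance $i-1$, $a_i$ at distance $i$, $b_i$ at distance $i+1$ from $v$; $X$ is $k$-regular with $k=b_0$. Thus $\lambda=a_1$ is the number of common neighbours of two adjacent vertices and $\mu=c_2$ that of two vertices at distance 2. *)

From mathcomp Require Import all_boot.
Set Implicit Arguments. Unset Strict Implicit. Unset Printing Implicit Defensive.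

Definition simple_graph (T : finType) (e : rel T) : Prop :=
  (forall x y, e x y = e y x) /\ (forall x, ~~ e x x).

Fixpoint ball (T : finType) (e : rel T) (n : nat) (x : T) : {set T} :=
  match n with
  | 0 => [set x]
  | n'.+1 => ball e n' x :|: [set y | [exists z in ball e n' x, e z y]]
  end.

Definition connected_graph (T : finType) (e : rel T) : Prop :=
  forall x y : T, y \in ball e #|T| x.

(* graph distance: least n with y in ball n x (meaningful when connected,
   since every distance is < #|T|) *)
Definition gdist (T : finType) (e : rel T) (x y : T) : nat :=
  find (fun i => y \in ball e i x) (iota 0 #|T|).

Definition nbr_at (T : finType) (e : rel T) (v w : T) (j : nat) : nat :=
  #|[set u | e w u & gdist e v u == j]|.

Definition diameter (T : finType) (e : rel T) (d : nat) : Prop :=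
  (exists x y, gdist e x y = d) /\ (forall x y, gdist e x y <= d).

Definition distance_regular (T : finType) (e : rel T) (d : nat)
  (a b c : nat -> nat) : Prop :=
  [/\ simple_graph e, connected_graph e, diameter e d &
      forall (v w : T) (i : nat), gdist e v w = i ->
        [/\ 0 < i -> nbr_at e v w i.-1 = c i,
            nbr_at e v w i = a i &
            nbr_at e v w i.+1 = b i]].

(* Write [N u] for the neighbourhood of [u], so that [|N u| = k], [|N u ∩ N w| = λ] for adjacent
   [u, w] and [= μ] for [u, w] at distance 2.  Then [k - λ] and [k - μ] are the sizes of
   [N u \ N w] in the two cases, and [|A \ C| <= |A \ B| + |B \ C|] compares them along a path:
   for a path [x ~ y ~ z] with [dist(x, z) = 2] it gives [k - μ <= 2 (k - λ)], and, when
   [a_2 > 0], for a neighbour [u] of [z] with [dist(x, u) = 2] it gives [k - λ <= 2 (k - μ)]. *)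
From mathcomp Require Import all_boot.
From mathcomp Require Import zify.
Set Implicit Arguments. Unset Strict Implicit. Unset Printing Implicit Defensive.

Lemma card_setD_triangle (T : finType) (A B C : {set T}) :
  #|A :\: C| <= #|A :\: B| + #|B :\: C|.
Proof.
apply: leq_trans (leq_card_setU (A :\: B) (B :\: C)).
apply: subset_leq_card; apply/subsetP => x; rewrite !inE.
by case: (x \in A); case: (x \in B); case: (x \in C).
Qed.

Section GraphDistance.
Variables (T : finType) (e : rel T).

Definition nbhd (u : T) : {set T} := [set t | e u t].

Lemma sub_ball m n v : m <= n -> ball e m v \subset ball e n v.
Proof.
elim: n => [|n IHn]; first by rewrite leqn0 => /eqP ->.
rewrite leq_eqVlt => /orP [/eqP -> // | ltmn].
exact: subset_trans (IHn ltmn) (subsetUl _ _).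
Qed.

Lemma gdist_le_card v w : gdist e v w <= #|T|.
Proof. by have := find_size (fun i => w \in ball e i v) (iota 0 #|T|); rewrite size_iota. Qed.

Lemma gdist_leq_small v w n : n < #|T| -> (gdist e v w <= n) = (w \in ball e n v).
Proof.
rewrite /gdist => ltnT; set p := fun i => w \in ball e i v.
apply/idP/idP => [le_dn | wn].
- have lt_find : find p (iota 0 #|T|) < size (iota 0 #|T|) by rewrite size_iota; lia.
  have := nth_find 0 (etrans (has_find _ _) lt_find).
  rewrite /p nth_iota ?add0n => [wd|]; last by rewrite size_iota in lt_find.
  exact: subsetP (sub_ball v le_dn) _ wd.
- rewrite leqNgt; apply/negP => lt_nd.
  by have := before_find 0 lt_nd; rewrite /p nth_iota // add0n wn.
Qed.

Hypothesis conn : connected_graph e.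

Lemma gdist_leq v w n : (gdist e v w <= n) = (w \in ball e n v).
Proof.
have [ltnT | leTn] := ltnP n #|T|; first exact: gdist_leq_small.
rewrite (leq_trans (gdist_le_card v w) leTn); symmetry.
exact: subsetP (sub_ball v leTn) _ (conn v w).
Qed.

Hypothesis sg : simple_graph e.

Lemma gdist_refl v : gdist e v v = 0.
Proof. by apply/eqP; rewrite -leqn0 gdist_leq inE. Qed.

Lemma gdist_eq1 v u : (gdist e v u == 1) = e v u.
Proof.
have [_ eirr] := sg.
have le1 := gdist_leq v u 1; have le0 := gdist_leq v u 0.
rewrite /= !inE in le1 le0.
have one_step : [exists z in [set v], e z u] = e v u.
  apply/existsP/idP => [[z] | evu]; first by rewrite inE => /andP [/eqP ->].
  by exists v; rewrite inE eqxx.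
rewrite one_step in le1; rewrite eqn_leq le1 ltnNge le0.
by case: eqP => [-> | _]; rewrite ?andbF ?andbT ?(negbTE (eirr v)).
Qed.

Lemma gdist_predS v w i :
  gdist e v w = i.+1 -> exists u, e w u /\ gdist e v u = i.
Proof.
have [esym _] := sg; move=> dvw.
have wi1 : w \in ball e i.+1 v by rewrite -gdist_leq dvw.
have wNi : w \notin ball e i v by rewrite -gdist_leq dvw ltnn.
move: wi1; rewrite /= inE (negbTE wNi) /= inE => /existsP [z /andP [zi ezw]].
exists z; split; first by rewrite esym.
apply/eqP; rewrite eqn_leq gdist_leq zi /= leqNgt; apply/negP.
case: i {dvw} wNi zi => [|j] // wNj _; rewrite ltnS gdist_leq => zj.
by move: wNj; rewrite /= !inE negb_or => /andP [_ /existsP]; apply; exists z; rewrite zj.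
Qed.

Lemma gdist_between v w i : i <= gdist e v w -> exists u, gdist e v u = i.
Proof.
move=> le_id; have := subnK le_id; move: (_ - i) => m.
elim: m w {le_id} => [|m IHm] w; first by rewrite add0n => ->; exists w.
by rewrite addSn => /esym/gdist_predS [u [_ /esym/IHm]].
Qed.

Lemma nbr_at1 v w : nbr_at e v w 1 = #|nbhd w :&: nbhd v|.
Proof. by apply: eq_card => t; rewrite !inE gdist_eq1. Qed.

End GraphDistance.

Section DistanceRegular.
Variables (T : finType) (e : rel T) (d : nat) (a b c : nat -> nat).
Hypothesis DR : distance_regular e d a b c.

Let conn : connected_graph e. Proof. by case: DR. Qed.
Let sg : simple_graph e. Proof. by case: DR. Qed.

Lemma card_nbhd u : #|nbhd e u| = b 0.
Proof.
case: DR => _ _ _ /(_ u u 0 (gdist_refl conn u)) [_ _ <-].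
by rewrite nbr_at1 // setIid.
Qed.

Lemma card_nbhdI_adj u w : e u w -> #|nbhd e w :&: nbhd e u| = a 1.
Proof.
move=> euw; case: DR => _ _ _ /(_ u w 1) [|_ <- _]; last by rewrite nbr_at1.
by apply/eqP; rewrite gdist_eq1.
Qed.

Lemma card_nbhdI_dist2 u w : gdist e u w = 2 -> #|nbhd e w :&: nbhd e u| = c 2.
Proof. by case: DR => _ _ _ /[apply] -[/(_ isT) <- _ _]; rewrite nbr_at1. Qed.

Lemma card_nbhdD_sym u w : #|nbhd e u :\: nbhd e w| = #|nbhd e w :\: nbhd e u|.
Proof. by rewrite !cardsD !card_nbhd setIC. Qed.

Lemma card_nbhdD_adj u w : e u w -> #|nbhd e w :\: nbhd e u| = b 0 - a 1.
Proof. by move=> euw; rewrite cardsD card_nbhdI_adj // card_nbhd. Qed.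

Lemma card_nbhdD_dist2 u w : gdist e u w = 2 -> #|nbhd e w :\: nbhd e u| = b 0 - c 2.
Proof. by move=> duw; rewrite cardsD card_nbhdI_dist2 // card_nbhd. Qed.

End DistanceRegular.

Theorem lemma4p1 (T : finType) (e : rel T) (d : nat) (a b c : nat -> nat) :
  distance_regular e d a b c -> 2 <= d ->
  (b 0 - c 2 <= 2 * (b 0 - a 1)) /\
  (a 2 != 0 -> b 0 - a 1 <= 2 * (b 0 - c 2)).
Proof.
move=> DR le2d; have [sg conn [[x0 [y0 dx0y0]] _] nbr] := DR.
have [esym _] := sg.
have [z dxz] : exists z, gdist e x0 z = 2.
  by apply: (gdist_between conn sg (w := y0)); rewrite dx0y0.
split.
  have [y [ezy dxy]] := gdist_predS conn sg dxz.
  have exy : e x0 y by rewrite -(gdist_eq1 conn sg) dxy.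
  have := card_setD_triangle (nbhd e z) (nbhd e y) (nbhd e x0).
  rewrite (card_nbhdD_dist2 DR dxz) (card_nbhdD_adj DR exy).
  have eyz : e y z by rewrite esym.
  by rewrite (card_nbhdD_adj DR eyz); lia.
move=> a2_neq0; have [_ a2E _] := nbr x0 z 2 dxz.
have : 0 < nbr_at e x0 z 2 by rewrite a2E lt0n.
rewrite /nbr_at card_gt0 => /set0Pn [u]; rewrite inE => /andP [ezu /eqP dxu].
have := card_setD_triangle (nbhd e z) (nbhd e x0) (nbhd e u).
rewrite (card_nbhdD_dist2 DR dxz) (card_nbhdD_sym DR x0) (card_nbhdD_dist2 DR dxu).
have euz : e u z by rewrite esym.
by rewrite (card_nbhdD_adj DR euz); lia.
Qed.
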